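(* Let $B\subseteq C(n,p)$ be finite and $e\ge1$. Then $(I_B)^{[p^e]}=I_{B^{[p^e]}}$, where $B^{[p^e]}=\bigsqcup_{d\ge0}\{c^{p^e}: c\in B_d\}$ and, for $c=(c_1,\dots,c_M)\in C(d,n,p)$, $c^{p^e}=(0,\dots,0,c_1,\dots,c_M)$ ($e$ zeros) $\in C(dp^e,n,p)$. In particular $(I_{c,d})^{[p^e]}=I_{c^{p^e},dp^e}$.
   Context: $\mathbf k$ is algebraically closed of characteristic $p>0$, $S=\mathbf k[x_1,\dots,x_n]$. For an ideal $I=\langle f_1,\dots,f_r\rangle$, its Frobenius power is $I^{[p^e]}=\langle f_1^{p^e},\dots,f_r^{p^e}\rangle$. Base-$p$ expansion: $a=\sum_ja_jp^j$ with $0\le a_j\le p-1$; for $d\ge1$, $M=\max\{j:d_j\ne0\}$. The carry pattern of a degree-$d$ monomial $x_1^{b_1}\cdots x_n^{b_n}$ (with $b_{i,j}$ the base-$p$ digits of $b_i$) is $(c_1,\dots,c_M)$ defined by $\sum_{i}\sum_{j<\ell}b_{i,j}p^j=c_\ell p^\ell+\sum_{j<\ell}d_jp^j$, $1\le\ell\le M$. $C(d,n,p)$ is the set of such carry patterns, ordered componentwise, $C(n,p)=\bigsqcup_dC(d,n,p)$, $B_d=B\cap C(d,n,p)$. $I_{c,d}$ is the ideal generated by the degree-$d$ monomials with carry pattern $\le c$, and $I_B=\sum_d\sum_{c\in B_d}I_{c,d}$. *)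

From mathcomp Require Import all_boot all_order all_algebra.
From mathcomp Require Import mpoly.
Set Implicit Arguments. Unset Strict Implicit. Unset Printing Implicit Defensive.
Import GRing.Theory.
Local Open Scope ring_scope.

Section Defs.
Variables (k : comRingType) (n : nat).
Implicit Types (p : nat) (m : 'X_{1..n}).

Definition digit p (a j : nat) : nat := ((a %/ p ^ j) %% p)%N.

(* M = max { j : d_j <> 0 } (digits of d vanish beyond index d) *)
Definition topDigit p (d : nat) : nat := (\max_(j < d.+1 | digit p d j != 0%N) j)%N.

(* carry pattern (c_1,...,c_M) of the monomial x^m, d = deg m:
   sum_i sum_{j<l} b_{i,j} p^j = c_l p^l + sum_{j<l} d_j p^j *)
Definition carry p m : seq nat :=
  let d := mdeg m in
  [seq ((\sum_(i < n) \sum_(j < l) digit p (m i) j * p ^ j)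
        - \sum_(j < l) digit p d j * p ^ j) %/ p ^ l
  | l <- iota 1 (topDigit p d)]%N.

(* c \in C(d,n,p)  (carry patterns are defined for d >= 1) *)
Definition inC p (d : nat) (c : seq nat) : Prop :=
  (0 < d)%N /\ exists m, mdeg m = d /\ carry p m = c.

Definition cle (c c' : seq nat) : bool :=
  (size c == size c') && all2 (fun a b => (a <= b)%N) c c'.

Definition genIdeal (G : {mpoly k[n]} -> Prop) (f : {mpoly k[n]}) : Prop :=
  exists r : seq ({mpoly k[n]} * {mpoly k[n]}),
    (forall x, x \in r -> G x.2) /\ f = \sum_(x <- r) x.1 * x.2.

(* Frobenius power I^[q]: ideal generated by the q-th powers of elements of I
   (in characteristic p with q = p^e this is the ideal generated by the q-th
   powers of any generating set of I) *)
Definition frobPow (q : nat) (I : {mpoly k[n]} -> Prop) : {mpoly k[n]} -> Prop :=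
  genIdeal (fun g => exists f, I f /\ g = f ^+ q).

Definition Icd p (c : seq nat) (d : nat) : {mpoly k[n]} -> Prop :=
  genIdeal (fun g => exists m, g = 'X_[m] /\ mdeg m = d /\ cle (carry p m) c).

(* I_B = sum_d sum_{c in B_d} I_{c,d}; B is a finite set of pairs (d, c) with
   c \in C(d,n,p) *)
Definition IB p (B : seq (nat * seq nat)) : {mpoly k[n]} -> Prop :=
  genIdeal (fun g => exists m, exists2 dc, dc \in B &
              g = 'X_[m] /\ mdeg m = dc.1 /\ cle (carry p m) dc.2).

End Defs.

Definition frobPat (e : nat) (c : seq nat) : seq nat := nseq e 0%N ++ c.

Definition frobB (p e : nat) (B : seq (nat * seq nat)) : seq (nat * seq nat) :=
  [seq ((dc.1 * p ^ e)%N, frobPat e dc.2) | dc <- B].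

(* Since x |-> x ^+ p^e is additive in characteristic p, the Frobenius power
   of an ideal generated by G is generated by the p^e-th powers of G; for a
   monomial ideal these are the monomials with all exponents multiplied by p^e.
   Multiplying the exponents by p^e shifts all base-p digits by e places, so it
   prepends e zero carries to the carry pattern and multiplies the degree by
   p^e.  Conversely, let x^m have degree divisible by p^e and carry pattern at
   most c^{p^e}, so that its e-th carry vanishes.  That carry is the sum of the
   residues of the exponents modulo p^e, divided by p^e; this sum is therefore
   smaller than p^e, yet congruent to the degree, hence 0: x^m is a p^e-th
   power. *)

From mathcomp Require Import all_boot all_order all_algebra.
From mathcomp Require Import mpoly.

Set Implicit Arguments.
Unset Strict Implicit.
Unset Printing Implicit Defensive.

Lemma cle_frobPat e a b : cle (frobPat e a) (frobPat e b) = cle a b.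
Proof. by elim: e => //= e IH; rewrite -IH /cle /= eqSS. Qed.

Lemma cle_nth s t i : cle s t -> i < size s -> nth 0 s i <= nth 0 t i.
Proof.
case/andP=> _; elim: s t i => [|x s IH] [|y t] [|i] //= /andP[xy st] //.
exact: IH.
Qed.

Lemma mulmn_of_dvd n q (m : 'X_{1..n}) :
  (forall i, q %| m i) -> exists m0 : 'X_{1..n}, m = (m0 *+ q)%MM.
Proof.
move=> q_dvd; exists [multinom m i %/ q | i < n].
by apply/mnmP => i; rewrite mulmnE mnmE divnK.
Qed.

Section CarryPatterns.
Variable p : nat.
Hypothesis p_gt1 : 1 < p.

Lemma sum_digitsE a l : \sum_(j < l) digit p a j * p ^ j = a %% p ^ l.
Proof.
elim: l => [|l IH]; first by rewrite big_ord0 expn0 modn1.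
rewrite big_ord_recr /= IH /digit modn_divl -expnS.
rewrite [in RHS](divn_eq (a %% p ^ l.+1) (p ^ l)) addnC.
by rewrite (modn_dvdm _ (dvdn_exp2l p (leqnSn l))).
Qed.

Lemma topDigitE d : 0 < d -> topDigit p d = trunc_log p d.
Proof.
move=> d_gt0; set t := trunc_log p d.
have d_lt : d < p ^ t.+1 := trunc_log_ltn d p_gt1.
have t_le : t <= d := ltnW (leq_trans (ltn_expl t p_gt1) (trunc_logP p_gt1 d_gt0)).
apply/eqP; rewrite eqn_leq; apply/andP; split.
  apply/bigmax_leqP => j; rewrite leqNgt; apply: contra => t_lt_j.
  by rewrite /digit divn_small ?mod0n // (leq_trans d_lt) // leq_exp2l.
apply: (@leq_bigmax_cond _ _ (fun j : 'I_d.+1 => nat_of_ord j) (@Ordinal d.+1 t t_le)).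
rewrite /digit modn_small -?lt0n ?divn_gt0 ?expn_gt0 ?(ltnW p_gt1) ?trunc_logP //.
by rewrite ltn_divLR ?expn_gt0 ?(ltnW p_gt1) // -expnS.
Qed.

Lemma trunc_logMX d e : 0 < d -> trunc_log p (d * p ^ e) = trunc_log p d + e.
Proof.
move=> d_gt0; elim: e => [|e IH]; first by rewrite muln1 addn0.
rewrite expnS mulnCA trunc_logMp // ?IH ?addnS //.
by rewrite muln_gt0 d_gt0 expn_gt0 ltnW.
Qed.

Section Carries.
Variable n : nat.
Implicit Types m : 'X_{1..n}.

Definition carry_at m l :=
  ((\sum_(i < n) m i %% p ^ l) - mdeg m %% p ^ l) %/ p ^ l.

Lemma carryE m : carry p m = [seq carry_at m l | l <- iota 1 (topDigit p (mdeg m))].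
Proof.
apply: eq_map => l; rewrite /carry_at -(sum_digitsE (mdeg m)).
by congr ((_ - _) %/ _); apply: eq_bigr => i _; rewrite sum_digitsE.
Qed.

Lemma carry_at_eq0 m l :
  p ^ l %| mdeg m -> carry_at m l = 0 <-> forall i, p ^ l %| m i.
Proof.
move=> /eqP deg_mod; rewrite /carry_at deg_mod subn0; set S := \sum_(i < n) _.
have S_dvd : p ^ l %| S by rewrite /dvdn /S modn_summ -mdegE deg_mod.
have -> : (S %/ p ^ l = 0) <-> (S = 0).
  by split=> [S0 | ->]; [rewrite -(divnK S_dvd) S0 | exact: div0n].
split=> [/eqP | m_dvd]; last by rewrite /S big1 // => i _; apply/eqP/m_dvd.
by rewrite /S sum_nat_eq0 => /forallP m_mod i; apply: m_mod.
Qed.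

Lemma carry_at_mulmn m e l : carry_at (m *+ p ^ e)%MM (e + l) = carry_at m l.
Proof.
have pe_gt0 : 0 < p ^ e by rewrite expn_gt0 ltnW.
rewrite /carry_at mdegMn addnC expnD -muln_modl //.
rewrite (eq_bigr (fun i => m i %% p ^ l * p ^ e)) => [|i _]; last first.
  by rewrite mulmnE muln_modl.
by rewrite -big_distrl -mulnBl divnMr.
Qed.

Lemma carry_mulmn m e : 0 < mdeg m ->
  carry p (m *+ p ^ e)%MM = frobPat e (carry p m).
Proof.
move=> deg_gt0; have pe_gt0 : 0 < p ^ e by rewrite expn_gt0 ltnW.
rewrite !carryE mdegMn !topDigitE ?muln_gt0 ?deg_gt0 //.
rewrite trunc_logMX // addnC iotaD map_cat; congr (_ ++ _).
  rewrite -[e in nseq e _](size_iota 1 e) -(size_map (carry_at (m *+ p ^ e)%MM)).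
  apply/all_pred1P/allP => c /mapP[l]; rewrite mem_iota add1n ltnS => /andP[_ le_l_e] ->.
  have dvd_pe : p ^ l %| p ^ e by rewrite dvdn_exp2l.
  apply/eqP/carry_at_eq0; first by rewrite mdegMn dvdn_mull.
  by move=> i; rewrite mulmnE dvdn_mull.
by rewrite addnC iotaDl -map_comp; apply: eq_map => l /=; rewrite carry_at_mulmn.
Qed.

Lemma carry_le_frobPatP m' d e c : 0 < d -> 0 < e ->
  mdeg m' = d * p ^ e /\ cle (carry p m') (frobPat e c) <->
  exists2 m, mdeg m = d /\ cle (carry p m) c & m' = (m *+ p ^ e)%MM.
Proof.
move=> d_gt0 e_gt0; have pe_gt0 : 0 < p ^ e by rewrite expn_gt0 ltnW.
split=> [[deg_m' le_m'] | [m [deg_m le_m] ->]]; last first.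
  by rewrite mdegMn deg_m carry_mulmn ?deg_m // cle_frobPat.
have e_lt : e.-1 < size (carry p m').
  by case/andP: le_m' => /eqP -> _; rewrite size_cat size_nseq ltn_addr // ltn_predL.
have carry_e : carry_at m' e = 0.
  apply/eqP; rewrite -leqn0; have := cle_nth le_m' e_lt.
  rewrite nth_cat size_nseq ltn_predL e_gt0 nth_nseq if_same.
  move: e_lt; rewrite carryE size_map size_iota => e_lt.
  by rewrite (nth_map 0) ?size_iota // nth_iota // add1n prednK.
have dvd_deg : p ^ e %| mdeg m' by rewrite deg_m' dvdn_mull.
have [m m'E] := mulmn_of_dvd ((carry_at_eq0 dvd_deg).1 carry_e).
have deg_m : mdeg m = d.
  by apply/eqP; rewrite -(eqn_pmul2r pe_gt0) -mdegMn -m'E deg_m'.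
exists m => //; split=> //.
by rewrite -(cle_frobPat e) -carry_mulmn ?deg_m // -m'E.
Qed.

End Carries.
End CarryPatterns.

Import GRing.Theory.

Section GeneratedIdeals.
Local Open Scope ring_scope.
Variables (k : comNzRingType) (n : nat).
Implicit Types (G : {mpoly k[n]} -> Prop) (f g : {mpoly k[n]}).

Lemma genIdeal_gen G g : G g -> genIdeal G g.
Proof.
move=> Gg; exists [:: (1, g)]; rewrite big_seq1 mul1r.
by split=> // x; rewrite inE => /eqP ->.
Qed.

Lemma genIdealMl G h f : genIdeal G f -> genIdeal G (h * f).
Proof.
case=> r [rG ->]; exists [seq (h * x.1, x.2) | x <- r]; split.
  by move=> _ /mapP[x /rG Gx ->].
by rewrite big_map mulr_sumr; apply: eq_bigr => x _; rewrite mulrA.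
Qed.

Lemma genIdeal_sum G (I : eqType) (r : seq I) (F : I -> {mpoly k[n]}) :
  (forall i, i \in r -> genIdeal G (F i)) -> genIdeal G (\sum_(i <- r) F i).
Proof.
move=> rG; rewrite big_seq; apply: big_ind => //; first by exists [::]; rewrite big_nil.
by move=> _ _ [r1 [r1G ->]] [r2 [r2G ->]]; exists (r1 ++ r2); rewrite big_cat;
  split=> // x; rewrite mem_cat => /orP[/r1G | /r2G].
Qed.

Lemma genIdeal_trans G G' f :
  (forall g, G g -> genIdeal G' g) -> genIdeal G f -> genIdeal G' f.
Proof.
by move=> GG' [r [rG ->]]; apply: genIdeal_sum => x /rG /GG' /(genIdealMl x.1).
Qed.

Lemma genIdeal_ext G G' : (forall g, G g <-> G' g) ->
  forall f, genIdeal G f <-> genIdeal G' f.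
Proof.
by move=> GG' f; split; apply: genIdeal_trans => g /GG' /genIdeal_gen.
Qed.

Lemma frobPow_ext q (I I' : {mpoly k[n]} -> Prop) : (forall f, I f <-> I' f) ->
  forall f, frobPow q I f <-> frobPow q I' f.
Proof.
move=> II'; apply: genIdeal_ext => g.
by split=> -[f [If ->]]; exists f; split=> //; apply/II'.
Qed.

Variable q : nat.
Hypothesis q_pchar : [pchar {mpoly k[n]}].-nat q.

Lemma frobPow_genIdeal G f :
  frobPow q (genIdeal G) f <-> genIdeal (fun g => exists h, G h /\ g = h ^+ q) f.
Proof.
have q_gt0 : (0 < q)%N by case/andP: q_pchar.
split; apply: genIdeal_trans => _ [h [Gh ->]]; last first.
  by apply: genIdeal_gen; exists h; split; first exact: genIdeal_gen.
case: Gh => r [rG ->].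
have frobD x y : (x + y) ^+ q = x ^+ q + y ^+ q := exprDn_pchar x y q_pchar.
rewrite (big_morph _ frobD (expr0n _ _)) (gtn_eqF q_gt0).
apply: genIdeal_sum => x /rG Gx; rewrite exprMn.
by apply/genIdealMl/genIdeal_gen; exists x.2.
Qed.
End GeneratedIdeals.

Section FrobeniusPowers.
Variables (k : comNzRingType) (n p e : nat).
Hypotheses (p_gt1 : 1 < p) (e_gt0 : 0 < e).
Hypothesis pe_pchar : [pchar {mpoly k[n]}]%R.-nat (p ^ e).

Lemma frobPow_IB (B : seq (nat * seq nat)) : (forall dc, dc \in B -> 0 < dc.1) ->
  forall f : {mpoly k[n]}, frobPow (p ^ e) (IB p B) f <-> IB p (frobB p e B) f.
Proof.
move=> B_gt0 f; apply: iff_trans (frobPow_genIdeal pe_pchar _ _) _.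
apply: genIdeal_ext => g; split.
  case=> _ [[m [dc dcB [-> dc_m]]] ->]; exists (m *+ p ^ e)%MM.
  exists (dc.1 * p ^ e, frobPat e dc.2); first exact: map_f.
  split; first exact: mpolyXn.
  by apply/(carry_le_frobPatP p_gt1); [exact: B_gt0 | | exists m].
case=> m' [_ /mapP[dc dcB ->] [-> /(carry_le_frobPatP p_gt1)]].
case=> // [|m dc_m ->]; first exact: B_gt0.
by exists 'X_[m]; split; [exists m, dc | rewrite mpolyXn].
Qed.

Lemma Icd_IB c d (f : {mpoly k[n]}) : Icd p c d f <-> IB p [:: (d, c)] f.
Proof.
apply: genIdeal_ext => g; split=> [[m [-> dc_m]] | [m [dc]]].
  by exists m, (d, c); rewrite ?mem_seq1.
by rewrite mem_seq1 => /eqP -> ?; exists m.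
Qed.

End FrobeniusPowers.

Local Open Scope ring_scope.

Theorem mainTheorem5 (k : closedFieldType) (p : nat) (hp : p \in [pchar k])
  (n : nat) (B : seq (nat * seq nat)) (e : nat) :
  (forall dc, dc \in B -> inC n p dc.1 dc.2) -> (0 < e)%N ->
  (forall f : {mpoly k[n]},
      frobPow (p ^ e) (IB p B) f <-> IB p (frobB p e B) f) /\
  (forall (d : nat) (c : seq nat), inC n p d c ->
     forall f : {mpoly k[n]},
       frobPow (p ^ e) (Icd p c d) f <-> Icd p (frobPat e c) (d * p ^ e) f).
Proof.
move=> B_inC e_gt0.
have p_gt1 : (1 < p)%N := prime_gt1 (pcharf_prime hp).
have pe_pchar : [pchar {mpoly k[n]}].-nat (p ^ e)%N.
  have p_pchar : p \in [pchar {mpoly k[n]}] by rewrite pchar_lalg.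
  by rewrite (eq_pnat _ (pcharf_eq p_pchar)) pnatX pnat_id ?(pcharf_prime hp).
split=> [|d c [d_gt0 _] f].
  by apply: frobPow_IB => // dc /B_inC[].
apply: iff_trans (frobPow_ext _ (@Icd_IB _ _ p c d) f) _.
apply: iff_trans (frobPow_IB p_gt1 e_gt0 pe_pchar _ f) _ => [dc|].
  by rewrite mem_seq1 => /eqP ->.
by apply: iff_sym; apply: Icd_IB.
Qed.
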